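(* Let $c$ be a command and $\rho_1,\rho_2,\mu_1,\mu_2$ states with $\mathtt b\notin\mathrm{UsedVars}(c)$, $\rho_1(\mathtt b)=\rho_2(\mathtt b)=0$, $|a|_{\mu_1}>0$ and $|a|_{\mu_2}>0$ for every array $a$, and $\langle c,\rho_1,\mu_1\rangle\approx\langle c,\rho_2,\mu_2\rangle$. Then $\langle\mathrm{USLH}(c),\rho_1,\mu_1,\mathtt{false}\rangle\approx_s\langle\mathrm{USLH}(c),\rho_2,\mu_2,\mathtt{false}\rangle$.
   Context: Language AWhile: scalar variables $X\in\mathcal V$, array names $a\in\mathcal A$. Arithmetic expressions $e::=n\ (n\in\mathbb N)\mid X\mid \mathrm{op}_{\mathbb N}(e,\dots,e)\mid be\,?\,e_1:e_2$; boolean expressions $be::=\mathtt{true}\mid\mathtt{false}\mid\mathrm{cmp}(e,e)\mid\mathrm{op}_{\mathbb B}(be,\dots,be)$; commands $c::=\mathtt{skip}\mid X:=e\mid c_1;c_2\mid \mathtt{if}\ be\ \mathtt{then}\ c_1\ \mathtt{else}\ c_2\mid\mathtt{while}\ be\ \mathtt{do}\ c\mid X\leftarrow a[e]\mid a[e]\leftarrow e'$. A scalar state is $\rho:\mathcal V\to\mathbb N$; an array state $\mu$ gives each array $a$ a size $|a|_\mu$ and values $\mu(a)[i]$ for $0\le i<|a|_\mu$. $[\![\cdot]\!]_\rho$ is the usual pure evaluation. $\mathrm{UsedVars}(c)$ is the set of scalar variables occurring in $c$; $\mathtt b$ is a reserved scalar variable. Sequential semantics: steps $\langle c,\rho,\mu\rangle\xrightarrow{o}\langle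 c',\rho',\mu'\rangle$, $o$ an optional observation $\mathrm{branch}(v)$, $\mathrm{read}(a,i)$, $\mathrm{write}(a,i)$. $X:=e\to\mathtt{skip}$ with $\rho[X\mapsto[\![e]\!]_\rho]$, no obs; $c_1;c_2\xrightarrow{o}c_1';c_2$ if $c_1\xrightarrow{o}c_1'$; $\mathtt{skip};c\to c$; $\mathtt{if}\ be\ \mathtt{then}\ c_{\mathtt{true}}\ \mathtt{else}\ c_{\mathtt{false}}\to c_v$, $v=[\![be]\!]_\rho$, obs $\mathrm{branch}(v)$; $\mathtt{while}\ be\ \mathtt{do}\ c\to\mathtt{if}\ be\ \mathtt{then}\ (c;\mathtt{while}\ be\ \mathtt{do}\ c)\ \mathtt{else}\ \mathtt{skip}$; $X\leftarrow a[ie]\to\mathtt{skip}$ setting $X$ to $\mu(a)[i]$, obs $\mathrm{read}(a,i)$, if $i=[\![ie]\!]_\rho<|a|_\mu$; $a[ie]\leftarrow e\to\mathtt{skip}$ with $\mu[a[i]\mapsto[\![e]\!]_\rho]$, obs $\mathrm{write}(a,i)$, if $i<|a|_\mu$. $\xrightarrow{O}{}^*$ is the reflexive-transitive closure collecting observations. $\langle c_1,\rho_1,\mu_1\rangle\approx\langle c_2,\rho_2,\mu_2\rangle$ iff for all $O_1,O_2$ with $\langle c_k,\rho_k,\mu_k\rangle\xrightarrow{O_k}{}^*$ some configuration, one of $O_1,O_2$ is a prefix of the other. Speculative semantics: configurations $\langle c,\rho,\mu,\beta\rangle$ with boolean flag $\beta$; steps labelled by an optional observation and optional directive $d\in\{\mathit{step},\mathit{force},\mathrm{load}(a',j),\mathrm{store}(a',j)\}$.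 Non-observing rules as sequentially (flag kept, no directive). Conditional: with $\mathit{step}$ as sequentially; with $\mathit{force}$ go to branch $\neg[\![be]\!]_\rho$ and set $\beta:=\mathtt{true}$; both observe $\mathrm{branch}([\![be]\!]_\rho)$. Read/write with $\mathit{step}$ as sequentially. Read with $\mathrm{load}(a',j)$: requires $\beta=\mathtt{true}$, $i=[\![ie]\!]_\rho\ge|a|_\mu$, $j<|a'|_\mu$, sets $X$ to $\mu(a')[j]$, obs $\mathrm{read}(a,i)$. Write with $\mathrm{store}(a',j)$: requires $\beta=\mathtt{true}$, $i\ge|a|_\mu$, $j<|a'|_\mu$, sets $\mu[a'[j]\mapsto[\![e]\!]_\rho]$, obs $\mathrm{write}(a,i)$. $\langle c_1,\rho_1,\mu_1,\beta_1\rangle\approx_s\langle c_2,\rho_2,\mu_2,\beta_2\rangle$ iff for all $D,O_1,O_2$, if both configurations multi-step with the same directive list $D$ producing $O_1$ resp. $O_2$, then $O_1=O_2$. Ultimate SLH: $\mathrm{USLH}(\mathtt{skip})=\mathtt{skip}$; $\mathrm{USLH}(X:=e)=X:=e$; $\mathrm{USLH}(c_1;c_2)=\mathrm{USLH}(c_1);\mathrm{USLH}(c_2)$; with $B(be)=(\mathtt b==0\ \&\&\ be)$: $\mathrm{USLH}(\mathtt{if}\ be\ \mathtt{then}\ c_1\ \mathtt{else}\ c_2)=\mathtt{if}\ B(be)\ \mathtt{then}\ (\mathtt b:=B(be)\,?\,\mathtt b:1;\mathrm{USLH}(c_1))\ \mathtt{else}\ (\mathtt b:=B(be)\,?\,1:\mathtt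 b;\mathrm{USLH}(c_2))$; $\mathrm{USLH}(\mathtt{while}\ be\ \mathtt{do}\ c)=(\mathtt{while}\ B(be)\ \mathtt{do}\ (\mathtt b:=B(be)\,?\,\mathtt b:1;\mathrm{USLH}(c)));\ \mathtt b:=B(be)\,?\,1:\mathtt b$; $\mathrm{USLH}(X\leftarrow a[i])=X\leftarrow a[(\mathtt b==1)\,?\,0:i]$; $\mathrm{USLH}(a[i]\leftarrow e)=a[(\mathtt b==1)\,?\,0:i]\leftarrow e$. *)

From Stdlib Require Import String List Arith Bool.
Import ListNotations.
Local Open Scope list_scope.

Definition var := string.
Definition arr := string.

Inductive aexp : Type :=
  | ANum (n : nat)
  | AId (x : var)
  | AOp (f : list nat -> nat) (es : list aexp)
  | ACTIf (be : bexp) (e1 e2 : aexp)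
with bexp : Type :=
  | BTrue
  | BFalse
  | BCmp (f : nat -> nat -> bool) (e1 e2 : aexp)
  | BOp (f : list bool -> bool) (bs : list bexp).

Inductive com : Type :=
  | CSkip
  | CAsgn (x : var) (e : aexp)
  | CSeq (c1 c2 : com)
  | CIf (be : bexp) (c1 c2 : com)
  | CWhile (be : bexp) (c : com)
  | CARead (x : var) (a : arr) (i : aexp)
  | CAWrite (a : arr) (i : aexp) (e : aexp).

Definition sstate := var -> nat.
(* array state mu : each array a is a list; |a|_mu = length (mu a), values nth *)
Definition astate := arr -> list nat.

Definition supd (r : sstate) (x : var) (v : nat) : sstate :=
  fun y => if String.eqb x y then v else r y.

Fixpoint upd_nth (l : list nat) (i : nat) (v : nat) : list nat :=
  match l, i with
  | [], _ => []
  | _ :: t, 0 => v :: t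
  | h :: t, S i' => h :: upd_nth t i' v
  end.

Definition aupd (m : astate) (a : arr) (i : nat) (v : nat) : astate :=
  fun b => if String.eqb a b then upd_nth (m a) i v else m b.

Definition asize (m : astate) (a : arr) : nat := length (m a).
Definition aget (m : astate) (a : arr) (i : nat) : nat := nth i (m a) 0.

Fixpoint aeval (r : sstate) (e : aexp) : nat :=
  match e with
  | ANum n => n
  | AId x => r x
  | AOp f es => f (map (aeval r) es)
  | ACTIf be e1 e2 => if beval r be then aeval r e1 else aeval r e2
  end
with beval (r : sstate) (b : bexp) : bool :=
  match b with
  | BTrue => true
  | BFalse => false
  | BCmp f e1 e2 => f (aeval r e1) (aeval r e2)
  | BOp f bs => f (map (beval r) bs)
  end.

Fixpoint avars (e : aexp) : list var :=
  match e with
  | ANum _ => []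
  | AId x => [x]
  | AOp _ es => flat_map avars es
  | ACTIf be e1 e2 => bvars be ++ avars e1 ++ avars e2
  end
with bvars (b : bexp) : list var :=
  match b with
  | BTrue | BFalse => []
  | BCmp _ e1 e2 => avars e1 ++ avars e2
  | BOp _ bs => flat_map bvars bs
  end.

Fixpoint used_vars (c : com) : list var :=
  match c with
  | CSkip => []
  | CAsgn x e => x :: avars e
  | CSeq c1 c2 => used_vars c1 ++ used_vars c2
  | CIf be c1 c2 => bvars be ++ used_vars c1 ++ used_vars c2
  | CWhile be c => bvars be ++ used_vars c
  | CARead x _ i => x :: avars i
  | CAWrite _ i e => avars i ++ avars e
  end.

Inductive observation : Type :=
  | OBranch (v : bool)
  | ORead (a : arr) (i : nat)
  | OWrite (a : arr) (i : nat).

Definition obs_list (o : option observation) : list observation :=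
  match o with None => [] | Some x => [x] end.

Inductive seq_step : com -> sstate -> astate -> option observation ->
                     com -> sstate -> astate -> Prop :=
  | SS_Asgn : forall x e r m,
      seq_step (CAsgn x e) r m None CSkip (supd r x (aeval r e)) m
  | SS_Seq : forall c1 c2 c1' r m o r' m',
      seq_step c1 r m o c1' r' m' ->
      seq_step (CSeq c1 c2) r m o (CSeq c1' c2) r' m'
  | SS_Skip : forall c r m,
      seq_step (CSeq CSkip c) r m None c r m
  | SS_If : forall be c1 c2 r m,
      seq_step (CIf be c1 c2) r m (Some (OBranch (beval r be)))
               (if beval r be then c1 else c2) r m
  | SS_While : forall be c r m,
      seq_step (CWhile be c) r m None
               (CIf be (CSeq c (CWhile be c)) CSkip) r m
  | SS_ARead : forall x a ie r m i,
      i = aeval r ie -> i < asize m a ->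
      seq_step (CARead x a ie) r m (Some (ORead a i))
               CSkip (supd r x (aget m a i)) m
  | SS_AWrite : forall a ie e r m i,
      i = aeval r ie -> i < asize m a ->
      seq_step (CAWrite a ie e) r m (Some (OWrite a i))
               CSkip r (aupd m a i (aeval r e)).

Inductive seq_multi : com -> sstate -> astate -> list observation ->
                      com -> sstate -> astate -> Prop :=
  | SM_Refl : forall c r m, seq_multi c r m [] c r m
  | SM_Step : forall c r m o c' r' m' os c'' r'' m'',
      seq_step c r m o c' r' m' ->
      seq_multi c' r' m' os c'' r'' m'' ->
      seq_multi c r m (obs_list o ++ os) c'' r'' m''.

Definition prefix {A} (l1 l2 : list A) : Prop := exists l, l2 = l1 ++ l.

Definition seq_equiv (c1 : com) (r1 : sstate) (m1 : astate)
                     (c2 : com) (r2 : sstate) (m2 : astate) : Prop :=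
  forall O1 O2 c1' r1' m1' c2' r2' m2',
    seq_multi c1 r1 m1 O1 c1' r1' m1' ->
    seq_multi c2 r2 m2 O2 c2' r2' m2' ->
    prefix O1 O2 \/ prefix O2 O1.

Inductive directive : Type :=
  | DStep
  | DForce
  | DLoad (a : arr) (j : nat)
  | DStore (a : arr) (j : nat).

Definition dir_list (d : option directive) : list directive :=
  match d with None => [] | Some x => [x] end.

Inductive spec_step : com -> sstate -> astate -> bool ->
                      option directive -> option observation ->
                      com -> sstate -> astate -> bool -> Prop :=
  | SP_Asgn : forall x e r m bt,
      spec_step (CAsgn x e) r m bt None None CSkip (supd r x (aeval r e)) m bt
  | SP_Seq : forall c1 c2 c1' r m bt d o r' m' bt',
      spec_step c1 r m bt d o c1' r' m' bt' ->
      spec_step (CSeq c1 c2) r m bt d o (CSeq c1' c2) r' m' bt'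
  | SP_Skip : forall c r m bt,
      spec_step (CSeq CSkip c) r m bt None None c r m bt
  | SP_If : forall be c1 c2 r m bt,
      spec_step (CIf be c1 c2) r m bt (Some DStep) (Some (OBranch (beval r be)))
                (if beval r be then c1 else c2) r m bt
  | SP_If_F : forall be c1 c2 r m bt,
      spec_step (CIf be c1 c2) r m bt (Some DForce) (Some (OBranch (beval r be)))
                (if negb (beval r be) then c1 else c2) r m true
  | SP_While : forall be c r m bt,
      spec_step (CWhile be c) r m bt None None
                (CIf be (CSeq c (CWhile be c)) CSkip) r m bt
  | SP_ARead : forall x a ie r m bt i,
      i = aeval r ie -> i < asize m a ->
      spec_step (CARead x a ie) r m bt (Some DStep) (Some (ORead a i))
                CSkip (supd r x (aget m a i)) m bt
  | SP_ARead_U : forall x a ie r m a' j i,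
      i = aeval r ie -> asize m a <= i -> j < asize m a' ->
      spec_step (CARead x a ie) r m true (Some (DLoad a' j)) (Some (ORead a i))
                CSkip (supd r x (aget m a' j)) m true
  | SP_AWrite : forall a ie e r m bt i,
      i = aeval r ie -> i < asize m a ->
      spec_step (CAWrite a ie e) r m bt (Some DStep) (Some (OWrite a i))
                CSkip r (aupd m a i (aeval r e)) bt
  | SP_AWrite_U : forall a ie e r m a' j i,
      i = aeval r ie -> asize m a <= i -> j < asize m a' ->
      spec_step (CAWrite a ie e) r m true (Some (DStore a' j)) (Some (OWrite a i))
                CSkip r (aupd m a' j (aeval r e)) true.

Inductive spec_multi : com -> sstate -> astate -> bool ->
                       list directive -> list observation ->
                       com -> sstate -> astate -> bool -> Prop :=
  | SPM_Refl : forall c r m bt, spec_multi c r m bt [] [] c r m bt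
  | SPM_Step : forall c r m bt d o c' r' m' bt' ds os c'' r'' m'' bt'',
      spec_step c r m bt d o c' r' m' bt' ->
      spec_multi c' r' m' bt' ds os c'' r'' m'' bt'' ->
      spec_multi c r m bt (dir_list d ++ ds) (obs_list o ++ os) c'' r'' m'' bt''.

Definition spec_equiv (c1 : com) (r1 : sstate) (m1 : astate) (b1 : bool)
                      (c2 : com) (r2 : sstate) (m2 : astate) (b2 : bool) : Prop :=
  forall D O1 O2 c1' r1' m1' b1' c2' r2' m2' b2',
    spec_multi c1 r1 m1 b1 D O1 c1' r1' m1' b1' ->
    spec_multi c2 r2 m2 b2 D O2 c2' r2' m2' b2' ->
    O1 = O2.

Definition b_var : var := "b"%string.

Definition BAnd (b1 b2 : bexp) : bexp :=
  BOp (fun l => match l with [x; y] => andb x y | _ => false end) [b1; b2].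
Definition BEqN (e1 e2 : aexp) : bexp := BCmp Nat.eqb e1 e2.

Definition Bmask (be : bexp) : bexp := BAnd (BEqN (AId b_var) (ANum 0)) be.

Fixpoint uslh (c : com) : com :=
  match c with
  | CSkip => CSkip
  | CAsgn x e => CAsgn x e
  | CSeq c1 c2 => CSeq (uslh c1) (uslh c2)
  | CIf be c1 c2 =>
      CIf (Bmask be)
          (CSeq (CAsgn b_var (ACTIf (Bmask be) (AId b_var) (ANum 1))) (uslh c1))
          (CSeq (CAsgn b_var (ACTIf (Bmask be) (ANum 1) (AId b_var))) (uslh c2))
  | CWhile be c0 =>
      CSeq (CWhile (Bmask be)
                   (CSeq (CAsgn b_var (ACTIf (Bmask be) (AId b_var) (ANum 1))) (uslh c0)))
           (CAsgn b_var (ACTIf (Bmask be) (ANum 1) (AId b_var)))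
  | CARead x a i =>
      CARead x a (ACTIf (BEqN (AId b_var) (ANum 1)) (ANum 0) i)
  | CAWrite a i e =>
      CAWrite a (ACTIf (BEqN (AId b_var) (ANum 1)) (ANum 0) i) e
  end.

(** As long as the execution follows the architectural path, the flag [b] of
    the hardened program stays [0], masks are inert, and every step of
    [uslh c] is matched by at most one sequential step of [c] with the same
    observation; sequential equivalence of the source then forces the two
    runs to observe the same thing and to stay in lockstep.  The first
    mispredicted branch leaves the state unchanged, is observed like the
    corresponding sequential branch, and is immediately followed by the
    assignment [b := 1].  From then on every condition is masked to [false]
    and every array index to [0], so the observations no longer depend on the
    data, whatever the directives. *)

From Stdlib Require Import List String FunctionalExtensionality.
Import ListNotations.

Set Implicit Arguments.

Notation mask_idx i := (ACTIf (BEqN (AId b_var) (ANum 1)) (ANum 0) i).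
Notation b_then be := (ACTIf (Bmask be) (AId b_var) (ANum 1)).
Notation b_else be := (ACTIf (Bmask be) (ANum 1) (AId b_var)).
Notation uslh_body be c := (CSeq (CAsgn b_var (b_then be)) (uslh c)).
Notation uslh_loop be c := (CWhile (Bmask be) (uslh_body be c)).
Notation b_else_asgn be := (CAsgn b_var (b_else be)).

Definition b_free (c : com) : Prop := ~ In b_var (used_vars c).

Lemma supd_neq r x y v : x <> y -> supd r x v y = r y.
Proof. intros Hxy. unfold supd. destruct (String.eqb_spec x y); congruence. Qed.

Lemma supd_eq r x v : supd r x v x = v.
Proof. unfold supd. now rewrite String.eqb_refl. Qed.

Lemma supd_id r x : supd r x (r x) = r.
Proof.
  apply functional_extensionality; intros y. unfold supd.
  destruct (String.eqb_spec x y); congruence.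
Qed.

Section Masks.
Variable r : sstate.

Lemma beval_Bmask_b0 be : r b_var = 0 -> beval r (Bmask be) = beval r be.
Proof. intros Hb. cbn. now rewrite Hb. Qed.

Lemma beval_Bmask_b1 be : r b_var = 1 -> beval r (Bmask be) = false.
Proof. intros Hb. cbn. now rewrite Hb. Qed.

Lemma aeval_mask_idx_b0 i : r b_var = 0 -> aeval r (mask_idx i) = aeval r i.
Proof. intros Hb. cbn. now rewrite Hb. Qed.

Lemma aeval_mask_idx_b1 i : r b_var = 1 -> aeval r (mask_idx i) = 0.
Proof. intros Hb. cbn. now rewrite Hb. Qed.

Lemma aeval_b_then_b0 be :
  r b_var = 0 -> aeval r (b_then be) = if beval r be then 0 else 1.
Proof. intros Hb. cbn. rewrite Hb. now destruct (beval r be). Qed.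

Lemma aeval_b_else_b0 be :
  r b_var = 0 -> aeval r (b_else be) = if beval r be then 1 else 0.
Proof. intros Hb. cbn. rewrite Hb. now destruct (beval r be). Qed.

Lemma aeval_b_then_b1 be : r b_var = 1 -> aeval r (b_then be) = 1.
Proof. intros Hb. cbn. now rewrite Hb. Qed.

Lemma aeval_b_else_b1 be : r b_var = 1 -> aeval r (b_else be) = 1.
Proof. intros Hb. cbn. now rewrite Hb. Qed.

End Masks.

Lemma seq_multi_one c r m o c' r' m' :
  seq_step c r m o c' r' m' -> seq_multi c r m (obs_list o) c' r' m'.
Proof. intros Hs. rewrite <- (app_nil_r (obs_list o)). econstructor; eauto. constructor. Qed.

Lemma seq_multi_trans c r m O1 c' r' m' O2 c'' r'' m'' :
  seq_multi c r m O1 c' r' m' -> seq_multi c' r' m' O2 c'' r'' m'' ->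
  seq_multi c r m (O1 ++ O2) c'' r'' m''.
Proof. induction 1; intros; simpl; auto. rewrite <- app_assoc. econstructor; eauto. Qed.

Lemma seq_multi_seq c1 c2 r m O c1' r' m' :
  seq_multi c1 r m O c1' r' m' -> seq_multi (CSeq c1 c2) r m O (CSeq c1' c2) r' m'.
Proof. induction 1; econstructor; eauto using seq_step. Qed.

Lemma seq_equiv_multi c1 r1 m1 c2 r2 m2 O c1' r1' m1' c2' r2' m2' :
  seq_equiv c1 r1 m1 c2 r2 m2 ->
  seq_multi c1 r1 m1 O c1' r1' m1' -> seq_multi c2 r2 m2 O c2' r2' m2' ->
  seq_equiv c1' r1' m1' c2' r2' m2'.
Proof.
  intros Heq Hm1 Hm2 O1 O2 c1'' r1'' m1'' c2'' r2'' m2'' Hm1' Hm2'.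
  destruct (Heq _ _ _ _ _ _ _ _ (seq_multi_trans Hm1 Hm1') (seq_multi_trans Hm2 Hm2'))
    as [[l Hl] | [l Hl]]; rewrite <- app_assoc in Hl; apply app_inv_head in Hl;
    [left | right]; now exists l.
Qed.

Lemma seq_equiv_obs c1 r1 m1 c2 r2 m2 o1 o2 c1' r1' m1' c2' r2' m2' :
  seq_equiv c1 r1 m1 c2 r2 m2 ->
  seq_multi c1 r1 m1 (obs_list o1) c1' r1' m1' ->
  seq_multi c2 r2 m2 (obs_list o2) c2' r2' m2' ->
  (o1 = None <-> o2 = None) -> o1 = o2.
Proof.
  intros Heq Hm1 Hm2 Hnone. destruct o1 as [x|], o2 as [y|].
  - destruct (Heq _ _ _ _ _ _ _ _ Hm1 Hm2) as [[l Hl] | [l Hl]];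
      now injection Hl as -> _.
  - now destruct Hnone as [_ H]; discriminate H.
  - now destruct Hnone as [H _]; discriminate H.
  - reflexivity.
Qed.

Lemma spec_step_dir_none_iff c r m bt d o c' r' m' bt' :
  spec_step c r m bt d o c' r' m' bt' -> (d = None <-> o = None).
Proof. induction 1; try tauto; split; discriminate. Qed.

Lemma spec_step_dir_none_same c r1 m1 b1 d1 o1 c1 r1' m1' b1'
                              r2 m2 b2 d2 o2 c2 r2' m2' b2' :
  spec_step c r1 m1 b1 d1 o1 c1 r1' m1' b1' ->
  spec_step c r2 m2 b2 d2 o2 c2 r2' m2' b2' -> (d1 = None <-> d2 = None).
Proof.
  intros Hs1; revert d2 o2 c2 r2' m2' b2'.
  induction Hs1; intros d2 o2 c2' r2' m2' b2' Hs2; inversion Hs2; subst;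
    eauto; try tauto; try (split; discriminate);
    match goal with H : spec_step CSkip _ _ _ _ _ _ _ _ _ |- _ => inversion H end.
Qed.

Lemma spec_step_dirs_app {ds1 ds2 : list directive} c r1 m1 b1 d1 o1 c1 r1' m1' b1'
                         r2 m2 b2 d2 o2 c2 r2' m2' b2' :
  dir_list d1 ++ ds1 = dir_list d2 ++ ds2 ->
  spec_step c r1 m1 b1 d1 o1 c1 r1' m1' b1' ->
  spec_step c r2 m2 b2 d2 o2 c2 r2' m2' b2' -> d1 = d2 /\ ds1 = ds2.
Proof.
  intros Hds Hs1 Hs2. pose proof (spec_step_dir_none_same Hs1 Hs2) as Hnone.
  destruct d1 as [d1|], d2 as [d2|]; simpl in Hds.
  - now injection Hds as -> ->.
  - now destruct Hnone as [_ H]; discriminate H.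
  - now destruct Hnone as [H _]; discriminate H.
  - now split.
Qed.

Lemma spec_step_det c r1 m1 b1 d o c1 r1' m1' b1' r2 m2 b2 c2 r2' m2' b2' :
  spec_step c r1 m1 b1 d o c1 r1' m1' b1' ->
  spec_step c r2 m2 b2 d o c2 r2' m2' b2' -> c1 = c2.
Proof.
  intros Hs1; revert c2 r2' m2' b2'.
  induction Hs1; intros c2' r2' m2' b2' Hs2; inversion Hs2; subst;
    try (f_equal; eauto; fail);
    try match goal with H : spec_step CSkip _ _ _ _ _ _ _ _ _ |- _ => inversion H end;
    match goal with H : beval _ _ = beval _ _ |- _ => now rewrite H end.
Qed.

Lemma spec_step_flag_true c r m d o c' r' m' bt' :
  spec_step c r m true d o c' r' m' bt' -> bt' = true.
Proof. intros Hs. remember true as bt. induction Hs; subst; auto. Qed.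

Lemma spec_multi_no_dirs c r m bt D O c' r' m' bt' :
  spec_multi c r m bt D O c' r' m' bt' -> D = [] -> O = [].
Proof.
  induction 1 as [| ? ? ? ? d o ? ? ? ? ? ? ? ? ? ? Hs _ IH]; auto.
  intros Hds. destruct d; [discriminate|]. simpl in *.
  now rewrite (proj1 (spec_step_dir_none_iff Hs) eq_refl), IH.
Qed.

(** The shapes of commands reachable from [uslh c]: [b] is only written by the
    branch bookkeeping, and all conditions and array indices are masked. *)
Inductive hardened : com -> Prop :=
  | H_skip : hardened CSkip
  | H_asgn x e : x <> b_var -> hardened (CAsgn x e)
  | H_b_then be : hardened (CAsgn b_var (b_then be))
  | H_b_else be : hardened (CAsgn b_var (b_else be))
  | H_seq c1 c2 : hardened c1 -> hardened c2 -> hardened (CSeq c1 c2)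
  | H_if be c1 c2 : hardened c1 -> hardened c2 -> hardened (CIf (Bmask be) c1 c2)
  | H_while be c : hardened c -> hardened (CWhile (Bmask be) c)
  | H_read x a i : x <> b_var -> hardened (CARead x a (mask_idx i))
  | H_write a i e : hardened (CAWrite a (mask_idx i) e).
#[local] Hint Constructors hardened : core.

Ltac b_free_from H :=
  let Hin := fresh in
  intro Hin; apply H; simpl; rewrite ?in_app_iff; subst; simpl; intuition auto.

Lemma hardened_uslh c : b_free c -> hardened (uslh c).
Proof.
  unfold b_free; induction c; simpl; intros Hfree.
  - constructor.
  - constructor. b_free_from Hfree.
  - constructor; [apply IHc1 | apply IHc2]; b_free_from Hfree.
  - do 2 constructor; auto; [apply IHc1 | apply IHc2]; b_free_from Hfree.
  - apply H_seq; auto. apply H_while, H_seq; auto. apply IHc; b_free_from Hfree.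
  - constructor. b_free_from Hfree.
  - constructor.
Qed.

Lemma hardened_step c r m bt d o c' r' m' bt' :
  hardened c -> spec_step c r m bt d o c' r' m' bt' -> hardened c'.
Proof.
  intros Hh Hs; revert Hh.
  induction Hs; intros Hh; inversion Hh; subst; auto;
    match goal with |- hardened (if ?v then _ else _) => destruct v end; auto.
Qed.

Lemma hardened_step_b1 c r m bt d o c' r' m' bt' :
  hardened c -> r b_var = 1 -> spec_step c r m bt d o c' r' m' bt' -> r' b_var = 1.
Proof.
  intros Hh Hb Hs; revert Hh.
  induction Hs; intros Hh; inversion Hh; subst; auto;
    rewrite ?supd_eq, ?supd_neq; auto using aeval_b_then_b1, aeval_b_else_b1.
Qed.

Lemma hardened_step_b1_obs c r1 m1 b1 d o1 c1 r1' m1' b1' r2 m2 b2 o2 c2 r2' m2' b2' :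
  hardened c -> r1 b_var = 1 -> r2 b_var = 1 ->
  spec_step c r1 m1 b1 d o1 c1 r1' m1' b1' ->
  spec_step c r2 m2 b2 d o2 c2 r2' m2' b2' -> o1 = o2.
Proof.
  intros Hh Hb1 Hb2 Hs1; revert o2 c2 r2' m2' b2' Hh.
  induction Hs1; intros o2 c2' r2' m2' b2' Hh Hs2; inversion Hs2; subst; auto;
    inversion Hh; subst; eauto;
    try match goal with H : spec_step CSkip _ _ _ _ _ _ _ _ _ |- _ => inversion H end;
    now rewrite ?beval_Bmask_b1, ?aeval_mask_idx_b1.
Qed.

(** The next effective step of [c] sets [b] to [1]. *)
Inductive b_pending (r : sstate) : com -> Prop :=
  | BP_asgn e : aeval r e = 1 -> b_pending r (CAsgn b_var e)
  | BP_seq c1 c2 : b_pending r c1 -> b_pending r (CSeq c1 c2)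
  | BP_skip c2 : b_pending r c2 -> b_pending r (CSeq CSkip c2).
#[local] Hint Constructors b_pending : core.

Definition b_one_or_pending (r : sstate) (c : com) : Prop :=
  r b_var = 1 \/ b_pending r c.

Lemma b_pending_step r c m bt d o c' r' m' bt' :
  b_pending r c -> spec_step c r m bt d o c' r' m' bt' ->
  o = None /\ b_one_or_pending r' c'.
Proof.
  unfold b_one_or_pending. intros Hp Hs; revert Hp.
  induction Hs; intros Hp; inversion Hp; subst;
    try match goal with H : b_pending _ CSkip |- _ => inversion H end;
    try match goal with H : spec_step CSkip _ _ _ _ _ _ _ _ _ |- _ => inversion H end;
    rewrite ?supd_eq; intuition auto.
Qed.

Lemma hardened_step_b_one_or_pending c r m bt d o c' r' m' bt' :
  hardened c -> b_one_or_pending r c -> spec_step c r m bt d o c' r' m' bt' ->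
  b_one_or_pending r' c'.
Proof.
  intros Hh [Hb | Hp] Hs.
  - left. exact (hardened_step_b1 Hh Hb Hs).
  - exact (proj2 (b_pending_step Hp Hs)).
Qed.

Lemma hardened_b_one_or_pending_obs c r1 m1 b1 d o1 c1 r1' m1' b1'
                                      r2 m2 b2 o2 c2 r2' m2' b2' :
  hardened c -> b_one_or_pending r1 c -> b_one_or_pending r2 c ->
  spec_step c r1 m1 b1 d o1 c1 r1' m1' b1' ->
  spec_step c r2 m2 b2 d o2 c2 r2' m2' b2' -> o1 = o2.
Proof.
  intros Hh Hpb1 Hpb2 Hs1 Hs2.
  pose proof (spec_step_dir_none_iff Hs1) as Hd1.
  pose proof (spec_step_dir_none_iff Hs2) as Hd2.
  destruct Hpb1 as [Hb1 | Hp1].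
  - destruct Hpb2 as [Hb2 | Hp2]; [exact (hardened_step_b1_obs Hh Hb1 Hb2 Hs1 Hs2) |].
    pose proof (proj1 (b_pending_step Hp2 Hs2)). intuition congruence.
  - pose proof (proj1 (b_pending_step Hp1 Hs1)). intuition congruence.
Qed.

(** * Simulation of the architectural path *)

(** [uslh_rel r ch cs]: in a state [r] with [b = 0], the hardened command [ch]
    is what remains of [uslh] applied to the source command [cs], possibly
    preceded by bookkeeping assignments to [b] that leave it at [0]. *)
Inductive uslh_rel (r : sstate) : com -> com -> Prop :=
  | UR_skip : uslh_rel r CSkip CSkip
  | UR_asgn x e : x <> b_var -> uslh_rel r (CAsgn x e) (CAsgn x e)
  | UR_seq ch1 c1 c2 : uslh_rel r ch1 c1 -> b_free c2 ->
      uslh_rel r (CSeq ch1 (uslh c2)) (CSeq c1 c2)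
  | UR_if be c1 c2 : b_free c1 -> b_free c2 ->
      uslh_rel r (CIf (Bmask be) (uslh_body be c1) (CSeq (b_else_asgn be) (uslh c2)))
                 (CIf be c1 c2)
  | UR_while be c : b_free c ->
      uslh_rel r (CSeq (uslh_loop be c) (b_else_asgn be)) (CWhile be c)
  | UR_while_if be c : b_free c ->
      uslh_rel r (CSeq (CIf (Bmask be) (CSeq (uslh_body be c) (uslh_loop be c)) CSkip)
                       (b_else_asgn be))
                 (CIf be (CSeq c (CWhile be c)) CSkip)
  | UR_while_body be ch c' c : b_free c -> uslh_rel r ch c' ->
      uslh_rel r (CSeq (CSeq ch (uslh_loop be c)) (b_else_asgn be)) (CSeq c' (CWhile be c))
  | UR_read x a i : x <> b_var -> uslh_rel r (CARead x a (mask_idx i)) (CARead x a i)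
  | UR_write a i e : uslh_rel r (CAWrite a (mask_idx i) e) (CAWrite a i e)
  | UR_b_noop_seq e ch cs : aeval r e = 0 -> hardened (CAsgn b_var e) ->
      uslh_rel r ch cs -> uslh_rel r (CSeq (CAsgn b_var e) ch) cs
  | UR_skip_seq ch cs : uslh_rel r ch cs -> uslh_rel r (CSeq CSkip ch) cs
  | UR_b_noop e : aeval r e = 0 -> hardened (CAsgn b_var e) ->
      uslh_rel r (CAsgn b_var e) CSkip.
#[local] Hint Constructors uslh_rel : core.

Lemma uslh_rel_uslh r c : b_free c -> uslh_rel r (uslh c) c.
Proof.
  unfold b_free; induction c; simpl; intros Hfree.
  - constructor.
  - constructor. b_free_from Hfree.
  - constructor; [apply IHc1 | unfold b_free]; b_free_from Hfree.
  - constructor; unfold b_free; b_free_from Hfree.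
  - constructor; unfold b_free; b_free_from Hfree.
  - constructor. b_free_from Hfree.
  - constructor.
Qed.

Lemma uslh_rel_hardened r ch cs : uslh_rel r ch cs -> hardened ch.
Proof.
  induction 1; auto using hardened_uslh;
    repeat (constructor; auto using hardened_uslh).
Qed.

Lemma uslh_rel_skip_inv r cs : uslh_rel r CSkip cs -> cs = CSkip.
Proof. now inversion 1. Qed.

Lemma uslh_rel_branch r be c1 c2 : r b_var = 0 -> b_free c1 -> b_free c2 ->
  uslh_rel r (if beval r (Bmask be) then uslh_body be c1 else CSeq (b_else_asgn be) (uslh c2))
             (if beval r be then c1 else c2).
Proof.
  intros Hb Hfree1 Hfree2. rewrite beval_Bmask_b0 by exact Hb.
  destruct (beval r be) eqn:Hbe; apply UR_b_noop_seq; auto using uslh_rel_uslh;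
    rewrite ?aeval_b_then_b0, ?aeval_b_else_b0, Hbe; auto.
Qed.

Lemma uslh_rel_loop_branch r be c : r b_var = 0 -> b_free c ->
  uslh_rel r (CSeq (if beval r (Bmask be) then CSeq (uslh_body be c) (uslh_loop be c)
                    else CSkip) (b_else_asgn be))
             (if beval r be then CSeq c (CWhile be c) else CSkip).
Proof.
  intros Hb Hfree. rewrite beval_Bmask_b0 by exact Hb.
  destruct (beval r be) eqn:Hbe.
  - apply UR_while_body, UR_b_noop_seq; auto using uslh_rel_uslh.
    now rewrite aeval_b_then_b0, Hbe.
  - apply UR_skip_seq, UR_b_noop; auto. now rewrite aeval_b_else_b0, Hbe.
Qed.

Ltac invert_step :=
  match goal with H : spec_step _ _ _ _ _ _ _ _ _ _ |- _ => inversion H; subst; clear H end.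

Ltac use_IH IH Hb Hd :=
  match goal with H : spec_step _ _ _ _ _ _ _ _ _ _ |- _ =>
    destruct (IH _ _ _ _ _ _ _ Hb H Hd) as (-> & ? & ? & ? & ?) end.

Lemma uslh_rel_step r ch cs : uslh_rel r ch cs ->
  forall m d o ch' r' m' bt', r b_var = 0 ->
  spec_step ch r m false d o ch' r' m' bt' -> d <> Some DForce ->
  bt' = false /\ r' b_var = 0 /\
  exists cs', seq_multi cs r m (obs_list o) cs' r' m' /\ uslh_rel r' ch' cs'.
Proof.
  induction 1 as [| | ch1 c1 c2 Hrel IH Hfree | be c1 c2 Hfree1 Hfree2 | be c Hfree
    | be c Hfree | be ch c' c Hfree Hrel IH | | | e ch cs He Hh Hrel IH | ch cs Hrel IH
    | e He Hh];
    intros m d o ch' r' m' bt' Hb Hs Hd; inversion Hs; subst; clear Hs;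
    try (exfalso; now apply Hd);
    try match goal with H : spec_step CSkip _ _ _ _ _ _ _ _ _ |- _ => inversion H end.
  - rewrite supd_neq by auto.
    eauto 8 using seq_multi_one, seq_step.
  - use_IH IH Hb Hd.
    eauto 8 using seq_multi_seq.
  - apply uslh_rel_skip_inv in Hrel as ->.
    eauto 8 using seq_multi_one, seq_step, uslh_rel_uslh.
  - split; [reflexivity | split; [exact Hb |]].
    exists (if beval r' be then c1 else c2). split.
    + rewrite beval_Bmask_b0 by exact Hb. apply seq_multi_one, SS_If.
    + now apply uslh_rel_branch.
  - invert_step.
    eauto 8 using seq_multi_one, seq_step.
  - invert_step; [| exfalso; now apply Hd].
    split; [reflexivity | split; [exact Hb |]].
    exists (if beval r' be then CSeq c (CWhile be c) else CSkip). split.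
    + rewrite beval_Bmask_b0 by exact Hb. apply seq_multi_one, SS_If.
    + now apply uslh_rel_loop_branch.
  - invert_step.
    + use_IH IH Hb Hd.
      eauto 8 using seq_multi_seq.
    + apply uslh_rel_skip_inv in Hrel as ->.
      eauto 8 using seq_multi_one, seq_step.
  - rewrite supd_neq by auto. rewrite aeval_mask_idx_b0 in * by exact Hb.
    eauto 8 using seq_multi_one, seq_step.
  - rewrite aeval_mask_idx_b0 in * by exact Hb.
    eauto 8 using seq_multi_one, seq_step.
  - invert_step. rewrite He, <- Hb, supd_id.
    eauto 8 using SM_Refl.
  - eauto 8 using SM_Refl.
  - rewrite He, <- Hb, supd_id.
    eauto 8 using SM_Refl.
Qed.

Ltac use_IH_force IH Hb :=
  match goal with H : spec_step _ _ _ _ _ _ _ _ _ _ |- _ =>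
    destruct (IH _ _ _ _ _ _ Hb H) as (-> & -> & -> & ? & ? & ?) end.

Lemma uslh_rel_force r ch cs : uslh_rel r ch cs ->
  forall m o ch' r' m' bt', r b_var = 0 ->
  spec_step ch r m false (Some DForce) o ch' r' m' bt' ->
  bt' = true /\ r' = r /\ m' = m /\ b_pending r ch' /\
  exists cs', seq_multi cs r m (obs_list o) cs' r m.
Proof.
  induction 1 as [| | ch1 c1 c2 Hrel IH Hfree | be c1 c2 Hfree1 Hfree2 | be c Hfree
    | be c Hfree | be ch c' c Hfree Hrel IH | | | e ch cs He Hh Hrel IH | ch cs Hrel IH
    | e He Hh];
    intros m o ch' r' m' bt' Hb Hs; inversion Hs; subst; clear Hs;
    try match goal with
        | H : spec_step (CWhile _ _) _ _ _ _ _ _ _ _ _ |- _ => inversion H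
        | H : spec_step (CAsgn _ _) _ _ _ _ _ _ _ _ _ |- _ => inversion H
        | H : spec_step CSkip _ _ _ _ _ _ _ _ _ |- _ => inversion H
        end.
  - use_IH_force IH Hb.
    eauto 8 using seq_multi_seq.
  - rewrite beval_Bmask_b0 by exact Hb.
    split; [reflexivity | split; [reflexivity | split; [reflexivity | split]]].
    + destruct (beval r' be) eqn:Hbe; simpl; apply BP_seq, BP_asgn;
        now rewrite ?aeval_b_then_b0, ?aeval_b_else_b0, Hbe.
    + eauto using seq_multi_one, seq_step.
  - invert_step. rewrite beval_Bmask_b0 by exact Hb.
    split; [reflexivity | split; [reflexivity | split; [reflexivity | split]]].
    + destruct (beval r' be) eqn:Hbe; simpl; repeat constructor;
        now rewrite ?aeval_b_then_b0, ?aeval_b_else_b0, Hbe.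
    + eauto using seq_multi_one, seq_step.
  - invert_step. use_IH_force IH Hb.
    repeat split; auto. eauto using seq_multi_seq.
Qed.

(** * Lockstep of the two speculative runs *)

Definition uslh_sync (c : com) (r1 : sstate) (m1 : astate) (r2 : sstate) (m2 : astate)
  : Prop :=
  r1 b_var = 0 /\ r2 b_var = 0 /\
  exists cs1 cs2, uslh_rel r1 c cs1 /\ uslh_rel r2 c cs2 /\ seq_equiv cs1 r1 m1 cs2 r2 m2.

Definition uslh_inv (c : com) (r1 : sstate) (m1 : astate) (b1 : bool)
                    (r2 : sstate) (m2 : astate) (b2 : bool) : Prop :=
  (b1 = false /\ b2 = false /\ uslh_sync c r1 m1 r2 m2)
  \/ (b1 = true /\ b2 = true /\ hardened c /\
      b_one_or_pending r1 c /\ b_one_or_pending r2 c).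

Lemma uslh_sync_step c r1 m1 r2 m2 d o1 c1 r1' m1' b1' o2 c2 r2' m2' b2' :
  uslh_sync c r1 m1 r2 m2 ->
  spec_step c r1 m1 false d o1 c1 r1' m1' b1' ->
  spec_step c r2 m2 false d o2 c2 r2' m2' b2' ->
  o1 = o2 /\ c1 = c2 /\ uslh_inv c1 r1' m1' b1' r2' m2' b2'.
Proof.
  intros (Hb1 & Hb2 & cs1 & cs2 & Hrel1 & Hrel2 & Heq) Hs1 Hs2.
  assert (Hnone : o1 = None <-> o2 = None).
  { rewrite <- (spec_step_dir_none_iff Hs1), (spec_step_dir_none_iff Hs2). reflexivity. }
  assert (Hforce : d = Some DForce \/ d <> Some DForce)
    by (destruct d as [[] |]; (left; reflexivity) || (right; discriminate)).
  destruct Hforce as [-> | Hd].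
  - destruct (uslh_rel_force Hrel1 Hb1 Hs1) as (-> & -> & -> & Hp1 & cs1' & Hm1).
    destruct (uslh_rel_force Hrel2 Hb2 Hs2) as (-> & -> & -> & Hp2 & cs2' & Hm2).
    pose proof (seq_equiv_obs Heq Hm1 Hm2 Hnone) as <-.
    pose proof (spec_step_det Hs1 Hs2) as <-.
    repeat split; right; unfold b_one_or_pending; repeat split; auto.
    exact (hardened_step (uslh_rel_hardened Hrel1) Hs1).
  - destruct (uslh_rel_step Hrel1 Hb1 Hs1 Hd) as (-> & Hb1' & cs1' & Hm1 & Hrel1').
    destruct (uslh_rel_step Hrel2 Hb2 Hs2 Hd) as (-> & Hb2' & cs2' & Hm2 & Hrel2').
    pose proof (seq_equiv_obs Heq Hm1 Hm2 Hnone) as <-.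
    pose proof (spec_step_det Hs1 Hs2) as <-.
    repeat split; left; repeat split; auto.
    exists cs1', cs2'. eauto using seq_equiv_multi.
Qed.

Lemma uslh_inv_step c r1 m1 b1 r2 m2 b2 d o1 c1 r1' m1' b1' o2 c2 r2' m2' b2' :
  uslh_inv c r1 m1 b1 r2 m2 b2 ->
  spec_step c r1 m1 b1 d o1 c1 r1' m1' b1' ->
  spec_step c r2 m2 b2 d o2 c2 r2' m2' b2' ->
  o1 = o2 /\ c1 = c2 /\ uslh_inv c1 r1' m1' b1' r2' m2' b2'.
Proof.
  intros [(-> & -> & Hsync) | (-> & -> & Hh & Hp1 & Hp2)] Hs1 Hs2;
    [exact (uslh_sync_step Hsync Hs1 Hs2) |].
  pose proof (hardened_b_one_or_pending_obs Hh Hp1 Hp2 Hs1 Hs2) as <-.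
  pose proof (spec_step_det Hs1 Hs2) as <-.
  repeat split; right.
  rewrite (spec_step_flag_true Hs1), (spec_step_flag_true Hs2).
  repeat split; eauto using hardened_step, hardened_step_b_one_or_pending.
Qed.

Lemma uslh_inv_multi c r1 m1 b1 D O1 c1 r1' m1' b1' :
  spec_multi c r1 m1 b1 D O1 c1 r1' m1' b1' ->
  forall r2 m2 b2 O2 c2 r2' m2' b2',
  spec_multi c r2 m2 b2 D O2 c2 r2' m2' b2' ->
  uslh_inv c r1 m1 b1 r2 m2 b2 -> O1 = O2.
Proof.
  induction 1 as [| c r1 m1 b1 d o1 c1 r1' m1' b1' ds os1 c1'' r1'' m1'' b1'' Hs1 Hm1 IH];
    intros r2 m2 b2 O2 c2 r2' m2' b2' Hm2 Hinv.
  - symmetry. exact (spec_multi_no_dirs Hm2 eq_refl).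
  - inversion Hm2 as [| ? ? ? ? d2 o2 ? ? ? ? ds2 os2 ? ? ? ? Hs2 Hm2' ]; subst.
    + eapply spec_multi_no_dirs; [econstructor; eassumption | auto].
    + match goal with Hds : app _ _ = app _ _ |- _ =>
        destruct (spec_step_dirs_app (eq_sym Hds) Hs1 Hs2) as [<- <-] end.
      destruct (uslh_inv_step Hinv Hs1 Hs2) as (<- & <- & Hinv').
      f_equal. exact (IH _ _ _ _ _ _ _ _ Hm2' Hinv').
Qed.

Unset Implicit Arguments.

Theorem theorem3p2 (c : com) (r1 r2 : sstate) (m1 m2 : astate) :
  ~ In b_var (used_vars c) ->
  r1 b_var = 0 -> r2 b_var = 0 ->
  (forall a, 0 < asize m1 a) -> (forall a, 0 < asize m2 a) ->
  seq_equiv c r1 m1 c r2 m2 ->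
  spec_equiv (uslh c) r1 m1 false (uslh c) r2 m2 false.
Proof.
  (* Array sizes only decide which directive an access consumes, never what it
     observes. *)
  intros Hfree Hb1 Hb2 _ _ Heq D O1 O2 c1 r1' m1' b1' c2 r2' m2' b2' Hm1 Hm2.
  apply (uslh_inv_multi Hm1 Hm2).
  left. repeat split; auto. exists c, c. auto using uslh_rel_uslh.
Qed.
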